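(* Let $q(w)=w^4$, $\psi(w)=\frac{iw+1}{w+i}$, $\Psi[z:w:t]=[z:iw+t:it+w]$ (an automorphism of $\mathbb{P}^2$), and $X:=\{[z:w:t]\in\mathbb{P}^2:z=0\}$. Let $R>0$, $\epsilon_0>0$, $l\ge1$ and open neighborhoods $U_1^l,U_2^l,U_3^l$ of $r_1=1,r_2=e^{2i\pi/3},r_3=e^{4i\pi/3}$ be as in the context. There exist $\tilde l\ge1$ and $\tilde\lambda>1$ such that for each $\alpha\in\mathbb{C}^*$, if $\eta\in\mathbb{C}^*$ is sufficiently close to $0$, then the map $F_\eta(z,w):=(\tilde\lambda z+\eta q^{\tilde l}(z),q^{\tilde l}(w))$ (as an endomorphism of $\mathbb{P}^2$) satisfies $$X\cup\overline{(\alpha\epsilon_0^{-1}\mathbb{D})\times\textstyle\bigcup_{i=1}^3U_i^l}\subset F_\eta\circ\Psi\Big((\alpha\epsilon_0^{-1}\mathbb{D})\times(R\mathbb{D}\setminus R^{-1}\mathbb{D})\Big).$$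
   Context: Setting: $R>0$ is large enough that $\psi^{-1}(\{r_1,r_2,r_3\})\subset R\mathbb{D}\setminus R^{-1}\mathbb{D}$; $\epsilon_0>0$ and the neighborhoods $U_i^l$ of $r_i$ are those given (for this $R$) by the statement: there exist $0<\lambda<1$, $\epsilon_0>0$, $l_0$ and neighborhoods $(U_i^l)_{l\ge l_0}$ of $r_i$ with exponentially shrinking diameters such that for all $l\ge l_0$, $\alpha\in\mathbb{C}^*$, the map $(z,w)\mapsto(\lambda z+\alpha w,w^{4^l})$ maps $(\alpha\epsilon_0^{-1}\mathbb{D})\times\bigcup_iU_i^l$ onto a set containing $\overline{(\alpha\epsilon_0^{-1}\mathbb{D})\times(R\mathbb{D}\setminus R^{-1}\mathbb{D})}$; and $l\ge l_0$ is chosen with $\overline{\bigcup_{i=1}^3(U_i^l\cup\psi^{-1}(U_i^l))}\subset R\mathbb{D}\setminus R^{-1}\mathbb{D}$. Subsets of $\mathbb{C}^2$ are viewed in $\mathbb{P}^2$ via $(z,w)\mapsto[z:w:1]$. $\mathbb{D}$ is the unit disc. *)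

From HB Require Import structures.
From mathcomp Require Import all_boot all_order all_algebra.
From mathcomp Require Import all_classical all_reals all_analysis.
From mathcomp Require Import complex.
Import numFieldTopology.Exports numFieldNormedType.Exports.
Import Order.TTheory GRing.Theory Num.Theory.

Set Implicit Arguments.
Unset Strict Implicit.
Unset Printing Implicit Defensive.

Local Open Scope ring_scope.
Local Open Scope classical_set_scope.
Local Open Scope complex_scope.

(* The usual (metric) topology on C = R[i], obtained from its numClosedFieldType
   structure (norm |.|); C*C gets the product topology. *)
HB.instance Definition _ (R : rcfType) := PseudoPointedMetric.copy R[i] (R[i])^o.

Definition expi (R : realType) (t : R) : R[i] := (cos t)%:C + 'i * (sin t)%:C.

(* r_{k+1} = e^{2 i pi k / 3}, k = 0,1,2 : r_1 = 1, r_2 = e^{2i pi/3}, r_3 = e^{4i pi/3} *)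
Definition root3 (R : realType) (k : 'I_3) : R[i] := expi (2 * pi * k%:R / 3 : R).

Definition psi (R : rcfType) (w : R[i]) : R[i] := ('i * w + 1) / (w + 'i).

(* psi^{-1}(U) for U a subset of C (the pole w = -i is mapped to infinity, not in U) *)
Definition psi_preim (R : rcfType) (U : set R[i]) : set R[i] :=
  [set w | w != - 'i /\ U (psi w)].

Definition sdisc (R : rcfType) (a : R[i]) : set R[i] :=
  [set a * u | u in [set u : R[i] | `|u| < 1]].

Definition annulus (R : rcfType) (r : R) : set R[i] :=
  sdisc r%:C `\` sdisc (r^-1)%:C.

(* ---------- the projective plane P^2 via homogeneous coordinates [z:w:t] ---------- *)
Definition pt (R : rcfType) := (R[i] * R[i] * R[i])%type.

Definition P2eq (R : rcfType) (p q : pt R) : Prop :=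
  exists c : R[i], c != 0 /\ p = (c * q.1.1, c * q.1.2, c * q.2).

(* A subset of P^2 is represented by the set of all its (nonzero) homogeneous
   representatives. *)

Definition Xline (R : rcfType) : set (pt R) :=
  [set p | p <> (0, 0, 0) /\ p.1.1 = 0].

(* a subset S of C^2 viewed in P^2 via (z,w) |-> [z:w:1] *)
Definition aff (R : rcfType) (S : set (R[i] * R[i])) : set (pt R) :=
  [set p | p.2 != 0 /\ S (p.1.1 / p.2, p.1.2 / p.2)].

(* image in P^2 of the set S (of representatives) under the map of P^2 induced by
   the homogeneous polynomial map f (f q <> 0 whenever q <> 0 for an endomorphism) *)
Definition pimage (R : rcfType) (f : pt R -> pt R) (S : set (pt R)) : set (pt R) :=
  [set p | p <> (0, 0, 0) /\ exists q, S q /\ f q <> (0, 0, 0) /\ P2eq p (f q)].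

Definition Psi_h (R : rcfType) (p : pt R) : pt R :=
  (p.1.1, 'i * p.1.2 + p.2, 'i * p.2 + p.1.2).

(* the endomorphism of P^2 of degree d extending (z,w) |-> (lam z + eta z^d, w^d):
   [z:w:t] |-> [lam z t^(d-1) + eta z^d : w^d : t^d] *)
Definition F_h (R : rcfType) (lam eta : R[i]) (d : nat) (p : pt R) : pt R :=
  (lam * p.1.1 * p.2 ^+ d.-1 + eta * p.1.1 ^+ d, p.1.2 ^+ d, p.2 ^+ d).

(* Since the multiplier [lamt] may be taken as large as we like, the covering
   needs none of the properties of [lam] or of the neighbourhoods [U l k]: only
   [0 < eps0] and [1 < Rad] are used, the latter because psi 1 = 1 = r_1.
   In the affine chart, F_eta o Psi maps (zeta (w + i), w) to
   (lamt zeta + eta zeta^d, psi(w)^d) with d = 4^lt.  Given a target (u, v),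
   take a d-th root s of v close to the positive real axis (iterated principal
   square roots); once 2^lt is large compared with (1 + Rad^2) / (Rad^2 - 1),
   |s + i| and |s - i| are within a factor Rad of each other, so w = psi^-1(s)
   lies in the annulus.  Then solve lamt zeta + eta zeta^d = u with
   |zeta| <= 2 |u / lamt|: some root of this polynomial lies within |u / lamt|
   of u / lamt, because the product of the distances from u / lamt to the roots
   is |u / lamt|^d.  The points of the line z = 0 at infinity all come from
   (0, -i). *)

From HB Require Import structures.
From mathcomp Require Import all_boot all_order all_algebra.
From mathcomp Require Import all_classical all_reals all_analysis.
From mathcomp Require Import complex.
From mathcomp Require Import ring lra.
Import numFieldTopology.Exports numFieldNormedType.Exports.
Import Order.TTheory GRing.Theory Num.Theory.
Import ComplexField.Normc.
Set Implicit Arguments.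
Unset Strict Implicit.
Unset Printing Implicit Defensive.

Local Open Scope ring_scope.
Local Open Scope classical_set_scope.
Local Open Scope complex_scope.

Lemma normc_ge_normRe (R : rcfType) (x : R[i]) : `|complex.Re x| <= normc x.
Proof. by case: x => a b /=; rewrite -sqrtr_sqr ler_wsqrtr // lerDl sqr_ge0. Qed.

Lemma sqrt_sub_le_of_sqr_mul_le (R : rcfType) (x y N : R) :
  0 <= x -> 0 <= N -> y ^+ 2 * N <= x ^+ 2 + y ^+ 2 ->
  (Num.sqrt (x ^+ 2 + y ^+ 2) - x) * N <= Num.sqrt (x ^+ 2 + y ^+ 2).
Proof.
move=> x0 N0 hy; set r := Num.sqrt _.
have r0 : 0 <= r := sqrtr_ge0 _.
have r2 : r ^+ 2 = x ^+ 2 + y ^+ 2 by rewrite sqr_sqrtr // addr_ge0 ?sqr_ge0.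
have xr : x <= r by rewrite -(ler_pXn2r (n := 2)) ?nnegrE // r2 lerDl sqr_ge0.
have [->|rpos] := eqVneq r 0; first by nra.
have {}rpos : 0 < r by rewrite lt0r rpos.
suff : (r - x) * N * r <= r * r by rewrite ler_pM2r.
have : 0 <= (r - x) * x * N by rewrite !mulr_ge0 ?subr_ge0.
nra.
Qed.

(* The bound reads (1 - cos (arg s)) 2^m <= 2; principal square roots halve the
   argument, which keeps it true. *)
Lemma exists_root_near_positive_axis (R : rcfType) (m : nat) (c : R[i]) :
  exists2 s : R[i], s ^+ (2 ^ m) = c & (normc s - complex.Re s) * 2 ^+ m <= 2 * normc s.
Proof.
elim: m c => [|m IH] c.
  exists c; first by rewrite expr1.
  have := normc_ge_normRe c; rewrite ler_norml expr0 mulr1; lra.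
have [s <- hs] := IH c.
exists (sqrtc s); first by rewrite expnS exprM sqr_sqrtc.
have : 0 <= complex.Re (sqrtc s) by case: s {hs} => a b; apply: sqrtr_ge0.
have := sqr_sqrtc s; case: (sqrtc s) => x y /= + x0.
rewrite expr2 /= => es; rewrite -es /= in hs.
rewrite [2 ^+ m.+1]exprSr mulrA [2 * _]mulrC ler_pM2r //; apply: sqrt_sub_le_of_sqr_mul_le => //.
move: hs.
have -> : (x * x - y * y) ^+ 2 + (x * y + y * x) ^+ 2 = (x ^+ 2 + y ^+ 2) ^+ 2 by ring.
rewrite sqrtr_sqr ger0_norm ?addr_ge0 ?sqr_ge0 //; nra.
Qed.

Lemma sqr_mul_le_of_sqrt_sub_le (R : rcfType) (a b N : R) :
  (Num.sqrt (a ^+ 2 + b ^+ 2) - a) * N ^+ 2 <= 2 * Num.sqrt (a ^+ 2 + b ^+ 2) ->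
  b ^+ 2 * N ^+ 2 <= 4 * (a ^+ 2 + b ^+ 2).
Proof.
set r := Num.sqrt _ => h.
have r0 : 0 <= r := sqrtr_ge0 _.
have r2 : r ^+ 2 = a ^+ 2 + b ^+ 2 by rewrite sqr_sqrtr // addr_ge0 ?sqr_ge0.
have /andP[ha ha'] : - r <= a <= r.
  by rewrite -ler_norml -(ler_pXn2r (n := 2)) ?nnegrE // real_normK ?num_real // r2 lerDl sqr_ge0.
have : (r - a) * N ^+ 2 * (r + a) <= 2 * r * (r + a) by apply: ler_wpM2r => //; lra.
have : 0 <= N ^+ 2 := sqr_ge0 N.
nra.
Qed.

Lemma sqr_dist_i_lt (R : realFieldType) (Rad a b N : R) : 1 < Rad -> 0 < N ->
  2 * (1 + Rad ^+ 2) < N * (Rad ^+ 2 - 1) -> b ^+ 2 * N ^+ 2 <= 4 * (a ^+ 2 + b ^+ 2) ->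
  a ^+ 2 + (b + 1) ^+ 2 < Rad ^+ 2 * (a ^+ 2 + (b - 1) ^+ 2).
Proof.
move=> Rad1 N0 hN hb.
set Q := a ^+ 2 + b ^+ 2 + 1.
have Q1 : 1 <= Q by rewrite /Q lerDr addr_ge0 ?sqr_ge0.
have bN : b * N <= Q by have := sqr_ge0 (b * N - 2); rewrite /Q; nra.
have RQ : 2 * (1 + Rad ^+ 2) * Q < N * (Rad ^+ 2 - 1) * Q by rewrite ltr_pM2r //; lra.
have R2 : 0 < 1 + Rad ^+ 2 by rewrite ltr_wpDr ?sqr_ge0.
rewrite -(ltr_pM2r N0).
have : 2 * (1 + Rad ^+ 2) * (b * N) <= 2 * (1 + Rad ^+ 2) * Q by rewrite ler_pM2l ?mulr_gt0.
rewrite /Q in RQ *; nra.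
Qed.

Definition psi_inv (R : rcfType) (s : R[i]) : R[i] := (1 - 'i * s) / (s - 'i).

Section PsiInverse.
Variable R : rcfType.
Implicit Types s : R[i].

Lemma i_mul_i : 'i * 'i = -1 :> R[i].
Proof. by rewrite -expr2 sqr_i. Qed.

Lemma normr_i : `|'i| = 1 :> R[i].
Proof. by simpc; rewrite expr0n /= add0r expr1n sqrtr1. Qed.

Lemma psi_inv_addi s : s != 'i -> psi_inv s + 'i = 2 / (s - 'i).
Proof.
move=> si; have si' : s - 'i != 0 by rewrite subr_eq0.
rewrite /psi_inv -[X in _ + X](mulfK si') -mulrDl; congr (_ / _).
by rewrite mulrBr i_mul_i; ring.
Qed.

Lemma psi_invK s : s != 'i -> psi (psi_inv s) = s.
Proof.
move=> si; have si' : s - 'i != 0 by rewrite subr_eq0.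
rewrite /psi psi_inv_addi //.
have -> : 'i * psi_inv s + 1 = 2 * s / (s - 'i).
  rewrite /psi_inv mulrA -[X in _ + X](mulfK si') -mulrDl; congr (_ / _).
  by rewrite mulrBr mulrA i_mul_i; ring.
by field.
Qed.

Lemma normr_psi_inv s : `|psi_inv s| = `|s + 'i| / `|s - 'i|.
Proof.
rewrite /psi_inv.
have -> : 1 - 'i * s = - 'i * (s + 'i) by rewrite mulrDr mulNr mulNr i_mul_i; ring.
by rewrite normf_div normrM normrN normr_i mul1r.
Qed.

End PsiInverse.

Section DiscsAndAnnuli.
Variable R : rcfType.
Implicit Types (r : R) (a s w x : R[i]).

Lemma sdisc_norm a x : a != 0 -> sdisc a x <-> `|x| < `|a|.
Proof.
move=> a0; have na : 0 < `|a| by rewrite normr_gt0.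
split=> [[u /= u1 <-]|xa]; first by rewrite normrM gtr_pMr.
exists (x / a); last by rewrite mulrC divfK.
by rewrite /= normf_div ltr_pdivrMr // mul1r.
Qed.

Lemma normr_real_pos r : 0 < r -> `|r%:C| = r%:C.
Proof. by move=> r0; rewrite gtr0_norm // ltcR. Qed.

Lemma psi_inv_annulus r s : 0 < r ->
  `|s + 'i| < r%:C * `|s - 'i| -> `|s - 'i| < r%:C * `|s + 'i| ->
  annulus r (psi_inv s).
Proof.
move=> r0 lt_pm lt_mp.
have rC : 0 < r%:C by rewrite ltcR.
have q0 : 0 < `|s - 'i|.
  rewrite lt0r normr_ge0 andbT; apply: contraTneq lt_pm => ->.
  by rewrite mulr0 normr_lt0.
have rV0 : r^-1%:C != 0 by rewrite fmorph_eq0 invr_eq0 gt_eqF.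
split=> [|/(sdisc_norm _ rV0)].
  by rewrite sdisc_norm ?gt_eqF // normr_real_pos // normr_psi_inv ltr_pdivrMr.
rewrite normr_psi_inv normr_real_pos ?invr_gt0 // rmorphV ?unitfE ?gt_eqF //=.
rewrite ltr_pdivrMr // ltr_pdivlMl // => /(lt_trans lt_mp).
by rewrite ltxx.
Qed.

Lemma annulus_unit_circle r w : 1 < r -> `|w| = 1 -> annulus r w.
Proof.
move=> r1 w1; have r0 : 0 < r by apply: lt_trans r1.
have rV0 : r^-1%:C != 0 by rewrite fmorph_eq0 invr_eq0 gt_eqF.
split=> [|/(sdisc_norm _ rV0)].
  rewrite sdisc_norm ?w1 ?normr_real_pos // -?[1]/(1%:C) ?ltcR //.
  by rewrite fmorph_eq0 gt_eqF.
by rewrite w1 normr_real_pos ?invr_gt0 // -[1]/(1%:C) ltcR invf_gt1 // ltNge ltW.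
Qed.

End DiscsAndAnnuli.

Lemma sqrt_lt_mul_sqrt (R : rcfType) (r P Q : R) : 0 < r -> 0 <= P ->
  P < r ^+ 2 * Q -> Num.sqrt P < r * Num.sqrt Q.
Proof.
move=> r0 P0 PQ; have Q0 : 0 < Q by rewrite -(pmulr_rgt0 _ (exprn_gt0 2 r0)) (le_lt_trans P0).
rewrite -[r]gtr0_norm // -sqrtr_sqr -sqrtrM ?sqr_ge0 // ltr_sqrt //.
by rewrite mulr_gt0 ?exprn_gt0.
Qed.

Lemma exists_psi_power_preimage (R : rcfType) (Rad : R) (n : nat) : 1 < Rad ->
  2 * (1 + Rad ^+ 2) < 2 ^+ n * (Rad ^+ 2 - 1) ->
  forall c : R[i], exists w, [/\ annulus Rad w, w + 'i != 0 & psi w ^+ (4 ^ n) = c].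
Proof.
move=> Rad1 hn c; have Rad0 : 0 < Rad by apply: lt_trans Rad1.
have [[a b] <- /= hs] := exists_root_near_positive_axis (2 * n) c.
have N0 : 0 < 2 ^+ n :> R by rewrite exprn_gt0.
have hb : b ^+ 2 * (2 ^+ n) ^+ 2 <= 4 * (a ^+ 2 + b ^+ 2).
  by apply: sqr_mul_le_of_sqrt_sub_le; rewrite -exprM mulnC.
have lt_pm := sqr_dist_i_lt Rad1 N0 hn hb.
have := sqr_dist_i_lt (a := a) (b := - b) Rad1 N0 hn; rewrite !sqrrN => /(_ hb).
have -> : (- b + 1) ^+ 2 = (b - 1) ^+ 2 by ring.
have -> : (- b - 1) ^+ 2 = (b + 1) ^+ 2 by ring.
move=> lt_mp.
have si : a +i* b != 'i.
  by apply: contraTneq lt_pm => -[-> ->]; rewrite subrr expr0n /= !add0r mulr0 -leNgt sqr_ge0.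
exists (psi_inv (a +i* b)); split.
- apply: psi_inv_annulus => //.
  + rewrite !normc_def /= -rmorphM ltcR addr0 subr0.
    by apply: sqrt_lt_mul_sqrt; rewrite ?addr_ge0 ?sqr_ge0.
  + rewrite !normc_def /= -rmorphM ltcR addr0 subr0.
    by apply: sqrt_lt_mul_sqrt; rewrite ?addr_ge0 ?sqr_ge0.
- by rewrite psi_inv_addi // mulf_neq0 ?pnatr_eq0 // invr_eq0 subr_eq0.
- by rewrite psi_invK // expnM.
Qed.

Lemma monic_root_near (F : numClosedFieldType) (P : {poly F}) (x c : F) :
  P \is monic -> (1 < size P)%N -> 0 <= c -> `|P.[x]| <= c ^+ (size P).-1 ->
  exists2 r, root P r & `|x - r| <= c.
Proof.
move=> mP sP c0 hPx.
have [rs] := closed_field_poly_normal P; rewrite (monicP mP) scale1r => Prs.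
have srs : size rs = (size P).-1 by rewrite Prs size_prod_XsubC.
have [/hasP[r rin hr]|far] := boolP (has (fun r => `|x - r| <= c) rs).
  by exists r; rewrite // Prs root_prod_XsubC.
suff /(le_lt_trans hPx) : c ^+ (size P).-1 < `|P.[x]| by rewrite ltxx.
rewrite -srs.
have -> : c ^+ size rs = \prod_(r <- rs) c by rewrite big_const_seq count_predT iter_mulr mulr1.
rewrite Prs horner_prod normr_prod big_seq [X in _ < X]big_seq; apply: ltr_prod => [|r rin].
  have : (0 < size rs)%N by rewrite srs -ltnS prednK // ltnW.
  by case: rs {Prs far srs} => // r rs _; apply/hasP; exists r; rewrite mem_head.
rewrite c0 hornerXsubC /= real_ltNge ?normr_real ?ger0_real //.
by apply: contra far => hr; apply/hasP; exists r.
Qed.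

Lemma exists_small_solution (F : numClosedFieldType) (lam eta u : F) (d : nat) :
  (1 < d)%N -> lam != 0 -> eta != 0 ->
  exists2 zeta, lam * zeta + eta * zeta ^+ d = u & `|zeta| <= 2 * `|u / lam|.
Proof.
move=> d1 lam0 eta0.
set P : {poly F} := 'X^d + ((lam / eta) *: 'X - (u / eta)%:P).
have sP : size P = d.+1.
  rewrite size_polyDl size_polyXn // (leq_ltn_trans (size_polyD _ _)) //.
  rewrite size_polyN gtn_max (leq_ltn_trans (size_scale_leq _ _)) ?size_polyX //.
  by rewrite (leq_ltn_trans (size_polyC_leq1 _)) // ltnW.
have mP : P \is monic.
  rewrite monicE /lead_coef sP coefD coefXn eqxx coefB coefZ coefX coefC /=.
  by rewrite gtn_eqF // gtn_eqF ?(ltnW d1) // mulr0 subr0 addr0.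
set x := u / lam.
have Px : P.[x] = x ^+ d.
  by rewrite !hornerD hornerXn hornerN hornerZ hornerX hornerC /x; field; rewrite eta0 lam0.
have hPx : `|P.[x]| <= `|x| ^+ (size P).-1 by rewrite Px sP normrX.
have sP1 : (1 < size P)%N by rewrite sP ltnS ltnW.
have [r /rootP Pr xr] := monic_root_near mP sP1 (normr_ge0 x) hPx.
exists r.
  move: Pr; rewrite !hornerD hornerXn hornerN hornerZ hornerX hornerC => Pr.
  apply/eqP; rewrite -subr_eq0.
  have -> : lam * r + eta * r ^+ d - u = eta * (r ^+ d + (lam / eta * r - u / eta)) by field.
  by rewrite Pr mulr0.
have := ler_distD x 0 r; rewrite sub0r normrN sub0r normrN mulr_natl mulr2n => /le_trans; apply.
by rewrite lerD2l.
Qed.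

Definition pscale (R : rcfType) (c : R[i]) (p : pt R) : pt R :=
  (c * p.1.1, c * p.1.2, c * p.2).

Section ProjectiveImage.
Variable R : rcfType.
Implicit Types (c lam eta w zeta : R[i]) (p q : pt R).

Lemma pimage_of_scale (f : pt R -> pt R) (S : set (pt R)) p q c :
  p <> (0, 0, 0) -> S q -> c != 0 -> f q = pscale c p -> pimage f S p.
Proof.
move=> p0 Sq c0 fq; split=> //; exists q; split=> //; rewrite fq {fq}.
case: p p0 => [[z w] t] p0; split.
  case=> /eqP + /eqP + /eqP; rewrite !mulf_eq0 (negbTE c0) /=.
  by move=> /eqP z0 /eqP w0 /eqP t0; apply: p0; rewrite z0 w0 t0.
by exists c^-1; split; rewrite ?invr_eq0 // /pscale /= !mulKf.
Qed.

Lemma aff_unit (S : set (R[i] * R[i])) (z w : R[i]) : S (z, w) -> aff S (z, w, 1).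
Proof. by split; rewrite ?oner_neq0 //= !divr1. Qed.

Lemma F_Psi_affine lam eta zeta w (d : nat) : (0 < d)%N -> w + 'i != 0 ->
  F_h lam eta d (Psi_h (zeta * (w + 'i), w, 1)) =
  pscale ((w + 'i) ^+ d) (lam * zeta + eta * zeta ^+ d, psi w ^+ d, 1).
Proof.
move=> d0 T0; rewrite /F_h /Psi_h /pscale /psi /= mulr1 [_ + w]addrC mulr1.
congr (_, _, _).
  by set T := w + 'i; rewrite exprMn -(prednK d0) !exprS; ring.
by rewrite expr_div_n [(w + 'i) ^+ d * _]mulrC divfK // expf_neq0.
Qed.

Lemma F_Psi_infinity lam eta (d : nat) : (0 < d)%N ->
  F_h lam eta d (Psi_h (0, - 'i, 1)) = (0, 2 ^+ d, 0).
Proof.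
move=> d0; rewrite /F_h /Psi_h /= mulrN i_mul_i opprK mulr1 subrr.
by rewrite mulr0 mul0r expr0n gtn_eqF // mulr0 addr0.
Qed.

End ProjectiveImage.

Section DiscClosure.
Variable R : rcfType.
Implicit Types (a u v x : R[i]).

Lemma sdisc_le_norm a x : sdisc a x -> `|x| <= `|a|.
Proof. by case=> y /= y1 <-; rewrite normrM ler_piMr // ltW. Qed.

Lemma closure_sdiscX_norm a (B : set R[i]) u v :
  closure (sdisc a `*` B) (u, v) -> `|u| <= `|a|.
Proof.
move=> cl; rewrite real_leNgt ?normr_real //; apply/negP => au.
have e0 : 0 < `|u| - `|a| by rewrite subr_gt0.
have [[x y] [[/= ax _] [/= ux _]]] := cl _ (nbhsx_ballx (u, v) _ e0).
suff : `|u| < `|u| by rewrite ltxx.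
rewrite -{1}(subrK x u) (le_lt_trans (ler_normD _ _)) //.
by rewrite -[X in _ < X](subrK `|a|) ltr_leD // sdisc_le_norm.
Qed.

End DiscClosure.

Lemma one_lt_radius (R : realType) (Rad : R) : 0 < Rad ->
  psi_preim [set root3 R ord0] `<=` annulus Rad -> 1 < Rad.
Proof.
move=> Rad0 sub.
have one_in : psi_preim [set root3 R ord0] 1.
  split; first by rewrite eq_complex /= negb_and oppr0 oner_neq0.
  have i1 : 'i + 1 != 0 :> R[i] by rewrite eq_complex /= add0r addr0 oner_eq0.
  rewrite /root3 /expi /= mulr0 mul0r cos0 sin0 /psi mulr1 [1 + _]addrC divff //.
  by rewrite mulr0 addr0.
have Rad0' : Rad%:C != 0 by rewrite fmorph_eq0 gt_eqF.
have [/(sdisc_norm _ Rad0') + _] := sub _ one_in.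
by rewrite normr1 normr_real_pos // ltcR.
Qed.

Section Covering.
Variables (R : realType) (Rad : R) (n : nat) (eta a : R[i]).
Hypotheses (Rad1 : 1 < Rad) (n0 : (0 < n)%N)
  (Rad_n : 2 * (1 + Rad ^+ 2) < 2 ^+ n * (Rad ^+ 2 - 1))
  (eta0 : eta != 0) (a0 : a != 0).

(* Any multiplier larger than 2 (1 + Rad) works: it keeps [zeta * (w + 'i)] inside the disc. *)
Local Notation lamt := (2 * Rad + 3).

Local Notation Fmap := (F_h lamt%:C eta (4 ^ n) \o @Psi_h R).
Local Notation source := (aff (sdisc a `*` annulus Rad)).

Let Rad0 : 0 < Rad. Proof. exact: lt_trans Rad1. Qed.
Let lamt0 : 0 < lamt. Proof. by rewrite addr_gt0 ?mulr_gt0. Qed.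
Let degree_gt1 : (1 < 4 ^ n)%N.
Proof. by rewrite -(expn0 4) ltn_exp2l. Qed.

Lemma scaled_solution_in_disc zeta w u :
  `|zeta| <= 2 * `|u / lamt%:C| -> `|w| < Rad%:C -> `|u| <= `|a| ->
  sdisc a (zeta * (w + 'i)).
Proof.
move=> hzeta hw hu; rewrite sdisc_norm // normrM.
have hT : `|w + 'i| <= (Rad + 1)%:C.
  by rewrite rmorphD /= (le_trans (ler_normD _ _)) // normr_i lerD2r ltW.
set k := 2 / lamt * (Rad + 1).
have k1 : k < 1 by rewrite /k mulrAC ltr_pdivrMr // mul1r mulrDr mulr1 ltrD2l ltr_nat.
have k0 : 0 <= k.
  by apply: mulr_ge0; [apply: divr_ge0 | apply: addr_ge0]; rewrite // ltW.
have : `|zeta| * `|w + 'i| <= `|u| * k%:C.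
  rewrite /k !rmorphM rmorphV ?unitfE ?gt_eqF //=.
  move: hzeta; rewrite normf_div normr_real_pos // => hzeta.
  have -> : `|u| * (2%:C / lamt%:C * (Rad + 1)%:C) = 2 * (`|u| / lamt%:C) * (Rad + 1)%:C.
    by rewrite rmorph_nat; ring.
  by apply: ler_pM.
move/le_lt_trans; apply.
by rewrite (le_lt_trans (ler_wpM2r _ hu)) ?gtr_pMr ?normr_gt0 ?lecR ?ltcR.
Qed.

Lemma affine_point_covered (p : pt R) :
  p.2 != 0 -> `|p.1.1 / p.2| <= `|a| -> pimage Fmap source p.
Proof.
case: p => [[z' w'] t] /= t0 hu.
have [w [ann wi psiw]] := exists_psi_power_preimage Rad1 Rad_n (w' / t).
have lamt0' : lamt%:C != 0 by rewrite fmorph_eq0 gt_eqF.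
have [zeta sol small] := exists_small_solution (z' / t) degree_gt1 lamt0' eta0.
apply: (pimage_of_scale (q := (zeta * (w + 'i), w, 1)) (c := (w + 'i) ^+ (4 ^ n) / t)).
- by case=> _ _ /eqP; rewrite (negbTE t0).
- apply: aff_unit; split=> //=; apply: (scaled_solution_in_disc (u := z' / t)) => //.
  have RadC : Rad%:C != 0 by rewrite fmorph_eq0 gt_eqF.
  by case: ann => /(sdisc_norm _ RadC); rewrite normr_real_pos.
- by rewrite mulf_neq0 ?expf_neq0 ?invr_eq0.
- rewrite /= F_Psi_affine ?expn_gt0 // sol psiw /pscale /=.
  by congr (_, _, _); field; rewrite t0.
Qed.

Lemma infinity_point_covered w' : w' != 0 -> pimage Fmap source (0, w', 0).
Proof.
move=> w0; have two_d : 2 ^+ (4 ^ n) != 0 :> R[i] by rewrite expf_neq0 ?pnatr_eq0.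
apply: (pimage_of_scale (q := (0, - 'i, 1)) (c := 2 ^+ (4 ^ n) / w')).
- by case=> /eqP; rewrite (negbTE w0).
- apply: aff_unit; split; first by rewrite /= sdisc_norm // normr0 normr_gt0.
  by apply: annulus_unit_circle; rewrite // normrN normr_i.
- by rewrite mulf_neq0 ?invr_eq0.
- by rewrite /= F_Psi_infinity ?expn_gt0 // /pscale /= mulr0 divfK.
Qed.

Lemma covering (B : set R[i]) :
  @Xline R `|` aff (closure (sdisc a `*` B)) `<=` pimage Fmap source.
Proof.
move=> [[z w] t] [[/= p0 z0]|[/= t0 cl]]; last first.
  by apply: affine_point_covered => //=; exact: closure_sdiscX_norm cl.
have [t0|t0] := eqVneq t 0; last first.
  by apply: affine_point_covered; rewrite //= z0 mul0r normr0 normr_ge0.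
rewrite z0 t0 in p0 *; apply: infinity_point_covered.
by apply/eqP => w0; apply: p0; rewrite w0.
Qed.

End Covering.

Lemma exists_pow2_gt (R : archiRealFieldType) (x e : R) : 0 < e ->
  exists2 n, (0 < n)%N & x < 2 ^+ n * e.
Proof.
move=> e0; exists (Num.truncn (x / e)).+1 => //.
rewrite -ltr_pdivrMr // (lt_trans (truncnS_gt _)) // -natrX ltr_nat.
by rewrite ltn_expl.
Qed.

Theorem lemma6p2 (R : realType) (Rad eps0 lam : R) (l0 l : nat)
    (U : nat -> 'I_3 -> set R[i]) :
  (* R > 0 large enough that psi^{-1}({r_1,r_2,r_3}) lies in R D \ R^{-1} D *)
  0 < Rad ->
  (forall k : 'I_3, psi_preim [set root3 R k] `<=` annulus Rad) ->
  (* the data of the context: 0 < lam < 1, eps0 > 0, l0, open neighbourhoods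
     U l k of r_{k+1} (l >= l0) with exponentially shrinking diameters ... *)
  0 < lam < 1 ->
  0 < eps0 ->
  (forall l', (l0 <= l')%N -> forall k : 'I_3, open (U l' k) /\ U l' k (root3 R k)) ->
  (exists (Cst mu : R), 0 < Cst /\ 0 < mu < 1 /\
     forall l', (l0 <= l')%N -> forall k : 'I_3, forall x y,
       U l' k x -> U l' k y -> `|x - y| <= (Cst * mu ^+ l')%:C) ->
  (* ... such that (z,w) |-> (lam z + alpha w, w^(4^l')) maps
     (alpha eps0^{-1} D) x U_{l'} onto a set containing the closure of
     (alpha eps0^{-1} D) x (R D \ R^{-1} D) *)
  (forall l', (l0 <= l')%N -> forall alpha : R[i], alpha != 0 ->
     closure (sdisc (alpha / eps0%:C) `*` annulus Rad) `<=`
     [set (lam%:C * p.1 + alpha * p.2, p.2 ^+ (4 ^ l')) | p in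
        sdisc (alpha / eps0%:C) `*` \bigcup_k U l' k]) ->
  (* the chosen l *)
  (1 <= l)%N -> (l0 <= l)%N ->
  closure (\bigcup_k (U l k `|` psi_preim (U l k))) `<=` annulus Rad ->
  (* conclusion *)
  exists lt : nat, (1 <= lt)%N /\
  exists lamt : R, 1 < lamt /\
  forall alpha : R[i], alpha != 0 ->
  exists delta : R, 0 < delta /\
  forall eta : R[i], eta != 0 -> `|eta| < delta%:C ->
    (@Xline R `|` aff (closure (sdisc (alpha / eps0%:C) `*` \bigcup_k U l k)))
    `<=` pimage (F_h lamt%:C eta (4 ^ lt) \o @Psi_h R)
                (aff (sdisc (alpha / eps0%:C) `*` annulus Rad)).
Proof.
move=> Rad0 roots_annulus _ eps0_gt0 _ _ _ _ _ _.
have Rad1 := one_lt_radius Rad0 (roots_annulus ord0).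
have lamt1 : 1 < 2 * Rad + 3 by rewrite ltr_wpDl ?mulr_ge0 ?ltW // ltr1n.
have Rad2 : 0 < Rad ^+ 2 - 1 by rewrite subr_gt0 expr_gt1 // ltW.
have [n n0 Rad_n] := exists_pow2_gt (2 * (1 + Rad ^+ 2)) Rad2.
exists n; split=> //; exists (2 * Rad + 3); split=> // alpha alpha0.
exists 1; split=> // eta eta0 _; apply: covering => //.
by rewrite mulf_neq0 // invr_eq0 fmorph_eq0 gt_eqF.
Qed.
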